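(* Let $d,n\ge 1$, let $\boldsymbol{a}_1,\ldots,\boldsymbol{a}_n\in\mathbf{R}^d$, let $w_1,\ldots,w_n>0$, fix $\varepsilon>0$ and $0<p<1$. Define $\Phi(\boldsymbol{x})=\sum_{j=1}^n w_j\,(\lVert\boldsymbol{x}-\boldsymbol{a}_j\rVert^2+\varepsilon)^{p/2}$. Let $\boldsymbol{x}^{(0)}\in\mathbf{R}^d$ and define, for $t\ge 0$, $$\mu_j^{(t)}=w_j\,(\lVert\boldsymbol{x}^{(t)}-\boldsymbol{a}_j\rVert^2+\varepsilon)^{p/2-1},\qquad \boldsymbol{x}^{(t+1)}=\frac{\sum_j\mu_j^{(t)}\boldsymbol{a}_j}{\sum_j\mu_j^{(t)}}.$$ Assume that $(\boldsymbol{x}^{(t)})$ converges to a local minimizer $\boldsymbol{x}^\star$ of $\Phi$ and that the Hessian $\Phi''(\boldsymbol{x}^\star)$ is positive definite. Then $(\Phi(\boldsymbol{x}^{(t)}))$ converges linearly to $\Phi(\boldsymbol{x}^\star)$, i.e. there exist $\nu<1$ and $T\ge 0$ such that $\Phi(\boldsymbol{x}^{(t+1)})-\Phi(\boldsymbol{x}^\star)\le\nu\big(\Phi(\boldsymbol{x}^{(t)})-\Phi(\boldsymbol{x}^\star)\big)$ for all $t\ge T$.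
   Context: $\lVert\cdot\rVert$ is the Euclidean norm on $\mathbf{R}^d$; $\Phi''$ denotes the Hessian matrix of the smooth function $\Phi$. *)

From HB Require Import structures.
From mathcomp Require Import all_boot all_order all_algebra.
From mathcomp Require Import all_classical all_reals all_analysis.
Set Implicit Arguments. Unset Strict Implicit. Unset Printing Implicit Defensive.
Import Order.TTheory GRing.Theory Num.Theory.
Import numFieldNormedType.Exports.
Local Open Scope ring_scope.
Local Open Scope classical_set_scope.

Section Defs.
Variables (R : realType) (d n : nat).

Definition sqnorm (x : 'rV[R]_d) : R := \sum_(i < d) (x ord0 i) ^+ 2.

Definition Phi (a : 'I_n -> 'rV[R]_d) (w : 'I_n -> R) (eps p : R)
  (x : 'rV[R]_d) : R :=
  \sum_(j < n) w j * powR (sqnorm (x - a j) + eps) (p / 2).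

Definition mu (a : 'I_n -> 'rV[R]_d) (w : 'I_n -> R) (eps p : R)
  (x : 'rV[R]_d) (j : 'I_n) : R :=
  w j * powR (sqnorm (x - a j) + eps) (p / 2 - 1).

Definition irls_step (a : 'I_n -> 'rV[R]_d) (w : 'I_n -> R) (eps p : R)
  (x : 'rV[R]_d) : 'rV[R]_d :=
  (\sum_(j < n) mu a w eps p x j)^-1 *: \sum_(j < n) (mu a w eps p x j *: a j).

Definition irls_iter (a : 'I_n -> 'rV[R]_d) (w : 'I_n -> R) (eps p : R)
  (x0 : 'rV[R]_d) (t : nat) : 'rV[R]_d :=
  iter t (irls_step a w eps p) x0.

Definition basis_vec (i : 'I_d) : 'rV[R]_d := delta_mx ord0 i.

Definition hessian (f : 'rV[R]_d -> R) (x : 'rV[R]_d) : 'M[R]_d :=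
  \matrix_(i < d, k < d) 'D_(basis_vec i) ('D_(basis_vec k) f) x.

Definition posdef (M : 'M[R]_d) : Prop :=
  forall v : 'rV[R]_d, v != 0 -> 0 < (v *m M *m v^T) ord0 ord0.

Definition local_minimizer (f : 'rV[R]_d -> R) (xs : 'rV[R]_d) : Prop :=
  \forall y \near xs, f xs <= f y.

End Defs.

From HB Require Import structures.
From mathcomp Require Import all_boot all_order all_algebra.
From mathcomp Require Import all_classical all_reals all_analysis.
From mathcomp Require Import ring lra.
Import Order.TTheory GRing.Theory Num.Theory.
Import numFieldNormedType.Exports.
Set Implicit Arguments. Unset Strict Implicit. Unset Printing Implicit Defensive.
Local Open Scope ring_scope.
Local Open Scope classical_set_scope.

(* IRLS is a majorization-minimization scheme.  By concavity of [s |-> s ^ (p/2)], each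
   summand of [Phi] lies below its tangent at the current iterate, and the IRLS step minimizes
   the resulting quadratic majorant exactly; hence one step decreases [Phi] by at least
   [p/2 * |g|^2 / sum_j mu_j], where [p * g] is the gradient of [Phi].  The weights satisfy
   [mu_j <= w_j eps^(p/2-1)].  Near [xs] the Hessian stays uniformly positive definite, and since
   [g xs = 0] the mean value theorem along segments gives the Polyak-Lojasiewicz inequality
   [lam * (Phi x - Phi xs) <= p * |g x|^2].  Once the iterates are close to [xs], the two
   inequalities combine into a contraction of the gap [Phi x - Phi xs]. *)

Section dot_product.
Variables (R : realType) (d : nat).
Implicit Types (u v x : 'rV[R]_d) (k : R).
Local Notation e := (@basis_vec R d).

Definition dot u v : R := \sum_(i < d) u ord0 i * v ord0 i.

Lemma dotC u v : dot u v = dot v u.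
Proof. by apply: eq_bigr => i _; rewrite mulrC. Qed.

Lemma dotDl u v x : dot (u + v) x = dot u x + dot v x.
Proof. by rewrite /dot -big_split; apply: eq_bigr => i _; rewrite !mxE mulrDl. Qed.

Lemma dotZl k u x : dot (k *: u) x = k * dot u x.
Proof. by rewrite /dot mulr_sumr; apply: eq_bigr => i _; rewrite !mxE mulrA. Qed.

Lemma dotNl u x : dot (- u) x = - dot u x.
Proof. by rewrite -scaleN1r dotZl mulN1r. Qed.

Lemma dotDr u v x : dot x (u + v) = dot x u + dot x v.
Proof. by rewrite dotC dotDl !(dotC x). Qed.

Lemma dotZr k u x : dot x (k *: u) = k * dot x u.
Proof. by rewrite dotC dotZl dotC. Qed.

Lemma dotNr u x : dot x (- u) = - dot x u.
Proof. by rewrite dotC dotNl dotC. Qed.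

Lemma dot0l x : dot 0 x = 0.
Proof. by rewrite /dot big1 // => i _; rewrite mxE mul0r. Qed.

Lemma dot_suml m (F : 'I_m -> 'rV[R]_d) x :
  dot (\sum_(j < m) F j) x = \sum_(j < m) dot (F j) x.
Proof.
elim/big_ind2: _ => //; first exact: dot0l.
by move=> u1 r1 u2 r2 <- <-; exact: dotDl.
Qed.

Lemma dot_basis_vec x (i : 'I_d) : dot x (e i) = x ord0 i.
Proof.
rewrite /dot (bigD1 i) //= big1 ?addr0; first by rewrite mxE !eqxx mulr1.
by move=> k ki; rewrite mxE (negbTE ki) andbF mulr0.
Qed.

Lemma sqnormE u : sqnorm u = dot u u.
Proof. by apply: eq_bigr => i _; rewrite expr2. Qed.

Lemma sqnorm_ge0 u : 0 <= sqnorm u.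
Proof. by apply: sumr_ge0 => i _; rewrite sqr_ge0. Qed.

Lemma sqnormD u v : sqnorm (u + v) = sqnorm u + 2 * dot u v + sqnorm v.
Proof. by rewrite !sqnormE dotDl !dotDr (dotC v u); ring. Qed.

Lemma sqnormZ k u : sqnorm (k *: u) = k ^+ 2 * sqnorm u.
Proof. by rewrite !sqnormE dotZl dotZr mulrA -expr2. Qed.

Lemma sqnorm_basis_vec (i : 'I_d) : sqnorm (e i) = 1.
Proof. by rewrite sqnormE dot_basis_vec mxE !eqxx. Qed.

Lemma sqr_coord_le_sqnorm u i : u ord0 i ^+ 2 <= sqnorm u.
Proof. by rewrite /sqnorm (bigD1 i) //= lerDl sumr_ge0 // => k _; exact: sqr_ge0. Qed.

Lemma sqnorm_eq0 u : (sqnorm u == 0) = (u == 0).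
Proof.
apply/eqP/eqP => [u0|->]; last by rewrite /sqnorm big1 // => i _; rewrite mxE expr0n.
apply/rowP => i; rewrite mxE; apply/eqP; rewrite -sqrf_eq0 eq_le sqr_ge0 andbT.
by rewrite -u0 sqr_coord_le_sqnorm.
Qed.

Lemma norm_coord_le1 u i : sqnorm u = 1 -> `|u ord0 i| <= 1.
Proof.
by move=> u1; rewrite -(@expr_le1 _ 2) // real_normK ?num_real // -u1 sqr_coord_le_sqnorm.
Qed.

Lemma dot_le_sqnorm g u lam :
  0 <= lam -> lam * sqnorm u <= dot g u -> lam * dot g u <= sqnorm g.
Proof.
move=> lam0 hgu; have := sqnorm_ge0 (g - lam *: u).
rewrite sqnormD -scaleNr sqnormZ sqrrN dotZr => h.
have : 0 <= lam * (dot g u - lam * sqnorm u) by rewrite mulr_ge0 // subr_ge0.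
nra.
Qed.

Lemma dot_expand u v : dot u v = \sum_i \sum_k u ord0 i * v ord0 k * dot (e i) (e k).
Proof.
rewrite {1}/dot; apply: eq_bigr => i _; rewrite (bigD1 i) //= big1 ?addr0.
  by rewrite dot_basis_vec mxE !eqxx mulr1.
by move=> k ki; rewrite dot_basis_vec mxE (negbTE ki) andbF mulr0.
Qed.

Lemma dot_mul_expand c u v :
  dot c u * dot c v = \sum_i \sum_k u ord0 i * v ord0 k * (dot c (e i) * dot c (e k)).
Proof.
rewrite {1 2}/dot big_distrlr /=; apply: eq_bigr => i _; apply: eq_bigr => k _.
by rewrite !dot_basis_vec; ring.
Qed.

Lemma sphere_lower_bound (Q : 'rV[R]_d -> R) c :
  (forall k v, Q (k *: v) = k ^+ 2 * Q v) -> (forall v, sqnorm v = 1 -> c <= Q v) ->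
  forall u, c * sqnorm u <= Q u.
Proof.
move=> QZ Qc u; have [->|u0] := eqVneq u 0.
  by rewrite -(scale0r 0) QZ sqnormZ expr0n !mul0r mulr0.
have su_gt0 : 0 < sqnorm u by rewrite lt_neqAle eq_sym sqnorm_eq0 u0 sqnorm_ge0.
set s := Num.sqrt (sqnorm u); have s_gt0 : 0 < s by rewrite sqrtr_gt0.
have s2 : s ^+ 2 = sqnorm u by rewrite sqr_sqrtr ?ltW.
have -> : u = s *: (s^-1 *: u) by rewrite scalerA divff ?gt_eqF // scale1r.
rewrite QZ sqnormZ; have v1 : sqnorm (s^-1 *: u) = 1.
  by rewrite sqnormZ exprVn s2 mulVf ?gt_eqF.
by rewrite v1 mulr1 mulrC ler_wpM2l ?sqr_ge0 ?Qc.
Qed.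

End dot_product.

Section real_facts.
Variable R : realType.

Lemma concave_powR_tangent (q s t : R) : 0 < q -> q < 1 -> 0 < s -> 0 < t ->
  t `^ q <= s `^ q + q * s `^ (q - 1) * (t - s).
Proof.
move=> q0 q1 s0 t0; have q1' : 0 < 1 - q by rewrite subr_gt0.
(* Young's inequality for [t^q * s^(1-q)] with exponents [1/q] and [1/(1-q)]. *)
have young : t `^ q * s `^ (1 - q) <= t `^ q `^ q^-1 / q^-1 + s `^ (1 - q) `^ (1 - q)^-1 / (1 - q)^-1.
  by apply: conjugate_powR; rewrite ?powR_ge0 ?invr_gt0 // !invrK; ring.
rewrite -!powRrM (mulfV (lt0r_neq0 q0)) (mulfV (lt0r_neq0 q1')) !invrK in young.
rewrite !powRr1 ?(ltW s0) ?(ltW t0) // in young.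
have sq_gt0 : 0 < s `^ (q - 1) by rewrite powR_gt0.
have -> : t `^ q = t `^ q * s `^ (1 - q) * s `^ (q - 1).
  rewrite -mulrA -powRD; last by rewrite (lt0r_neq0 s0) implybT.
  by rewrite (_ : 1 - q + (q - 1) = 0) ?powRr0 ?mulr1 //; ring.
apply: le_trans (ler_wpM2r (ltW sq_gt0) young) _.
rewrite -(mulr_powRB1 (ltW s0) q0) le_eqVlt; apply/orP; left; apply/eqP; ring.
Qed.

Lemma le0_ger_powR (r s t : R) : r <= 0 -> 0 < s -> s <= t -> t `^ r <= s `^ r.
Proof.
move=> r0 s0 st; have t0 := lt_le_trans s0 st.
have powRNN x : x `^ r = (x `^ (- r))^-1 by rewrite powRN invrK.
rewrite !powRNN lef_pV2 ?posrE ?powR_gt0 //.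
by apply: (@ge0_ler_powR R (- r)); rewrite ?oppr_ge0 // nnegrE ltW.
Qed.

Lemma linear_rate (D D' G M M' lam p : R) :
  0 < M -> M <= M' -> 0 <= G -> 0 < lam -> 0 < p ->
  D' <= D - p / 2 * (G / M) -> lam * D <= p * G ->
  D' <= (1 - lam / (2 * M')) * D.
Proof.
move=> M0 MM' G0 lam0 p0 descent PL.
have M'0 := lt_le_trans M0 MM'.
have key : lam * D / (2 * M') <= p / 2 * (G / M).
  apply: (le_trans (ler_wpM2r _ PL)); first by rewrite invr_ge0 mulr_ge0 // ltW.
  rewrite (_ : p * G / (2 * M') = p / 2 * (G / M')); last by field; rewrite gt_eqF.
  apply: ler_wpM2l; first by rewrite divr_ge0 ?ltW.
  by apply: ler_wpM2l => //; rewrite lef_pV2.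
rewrite (_ : (1 - lam / (2 * M')) * D = D - lam * D / (2 * M')); last by field; rewrite gt_eqF.
lra.
Qed.

End real_facts.

Section real_derivatives.
Variable R : realType.
Implicit Types (f g : R -> R) (a b c k m df dg s x : R).

Lemma is_derive_eq f g x df dg :
  f =1 g -> df = dg -> is_derive x 1 f df -> is_derive x 1 g dg.
Proof. by move=> /funext <- <-. Qed.

Lemma is_derive_affine k c x : is_derive x 1 (fun s => s * k + c) k.
Proof.
apply: is_derive_eq (is_deriveD (is_deriveZ k (is_derive_id x 1)) (is_derive_cst c x 1)).
  by move=> s /=; rewrite mulrC.
by rewrite addr0 /GRing.scale /= mulr1.
Qed.

Lemma is_derive_addr f df c x :
  is_derive x 1 f df -> is_derive x 1 (fun s => f s + c) df.
Proof. by move=> H; apply: is_derive_eq (is_deriveD H (is_derive_cst c x 1)) => //; rewrite addr0. Qed.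

Lemma is_derive_mul f g df dg x : is_derive x 1 f df -> is_derive x 1 g dg ->
  is_derive x 1 (fun s => f s * g s) (f x * dg + g x * df).
Proof. by move=> H1 H2; have := is_deriveM H1 H2. Qed.

Lemma is_derive_mull f df k x :
  is_derive x 1 f df -> is_derive x 1 (fun s => k * f s) (k * df).
Proof.
move=> H; apply: is_derive_eq (is_derive_mul (is_derive_cst k x 1) H) => //.
by rewrite mulr0 addr0.
Qed.

Lemma is_derive_sumf (k : nat) (h : 'I_k -> R -> R) (dh : 'I_k -> R) x :
  (forall i, is_derive x 1 (h i) (dh i)) ->
  is_derive x 1 (fun s => \sum_i h i s) (\sum_i dh i).
Proof. by move=> H; have := is_derive_sum H; rewrite fct_sumE. Qed.

Lemma is_derive_powR_comp f df r x : is_derive x 1 f df -> 0 < f x ->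
  is_derive x 1 (fun s => f s `^ r) (r * f x `^ (r - 1) * df).
Proof. by move=> H f0; have := is_derive1_comp (is_derive1_powR r f0) H. Qed.

Lemma derivable_continuous f (df : R -> R) a b :
  (forall s, is_derive s 1 f (df s)) -> {within `[a, b], continuous f}.
Proof. by move=> H; apply: derivable_within_continuous => s _; case: (H s). Qed.

Lemma MVT_lower_bound f (df : R -> R) a b m : a <= b ->
  (forall s, is_derive s 1 f (df s)) -> (forall s, a <= s <= b -> m <= df s) ->
  m * (b - a) <= f b - f a.
Proof.
move=> ab H Hm; have [c] := MVT_segment ab (fun s _ => H s) (derivable_continuous H).
by rewrite in_itv => /Hm mc ->; rewrite ler_wpM2r // subr_ge0.
Qed.

Lemma MVT_upper_bound f (df : R -> R) a b m : a <= b ->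
  (forall s, is_derive s 1 f (df s)) -> (forall s, a <= s <= b -> df s <= m) ->
  f b - f a <= m * (b - a).
Proof.
move=> ab H Hm; have [c] := MVT_segment ab (fun s _ => H s) (derivable_continuous H).
by rewrite in_itv => /Hm mc ->; rewrite ler_wpM2r // subr_ge0.
Qed.

End real_derivatives.

Section pointwise_continuity.
Variables (T : topologicalType) (R : realType).
Implicit Types (f g : T -> R) (z : T).

Lemma continuous_addf f g z : {for z, continuous f} -> {for z, continuous g} ->
  {for z, continuous (fun x => f x + g x)}.
Proof. exact: continuousD. Qed.

Lemma continuous_mulf f g z : {for z, continuous f} -> {for z, continuous g} ->
  {for z, continuous (fun x => f x * g x)}.
Proof. exact: continuousM. Qed.

Lemma continuous_sumf m (F : 'I_m -> T -> R) z :
  (forall i, {for z, continuous (F i)}) -> {for z, continuous (fun x => \sum_i F i x)}.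
Proof.
move=> H; apply: cvg_big => [|i _]; [exact: add_continuous|exact: H].
Qed.

Lemma continuous_normf f z : {for z, continuous f} -> {for z, continuous (fun x => `|f x|)}.
Proof. by move=> cf; apply: (continuous_comp cf); exact: norm_continuous. Qed.

Lemma continuous_powRf f r z : 0 < f z -> {for z, continuous f} ->
  {for z, continuous (fun x => f x `^ r)}.
Proof.
move=> fz cf; apply: (continuous_comp cf (g := fun y => y `^ r)).
apply: differentiable_continuous; apply/derivable1_diffP.
by apply: derivable_powR; rewrite in_itv /= fz.
Qed.

Lemma continuous_dotf d (f g : T -> 'rV[R]_d) z :
  {for z, continuous f} -> {for z, continuous g} -> {for z, continuous (fun x => dot (f x) (g x))}.
Proof.
move=> cf cg; apply: continuous_sumf => i.
have coord (h : T -> 'rV[R]_d) : {for z, continuous h} -> {for z, continuous (fun x => h x ord0 i)}.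
  by move=> ch; apply: (continuous_comp ch (g := fun v : 'rV[R]_d => v ord0 i)); exact: coord_continuous.
by apply: continuous_mulf; exact: coord.
Qed.

End pointwise_continuity.

Lemma ball_segment (R : realType) (V : normedModType R) (x y : V) r s :
  ball x r y -> 0 <= s <= 1 -> ball x r (s *: (y - x) + x).
Proof.
rewrite -!ball_normE /ball_ /= => xy /andP[s0 s1].
rewrite opprD addrCA subrr addr0 normrN normrZ distrC ger0_norm //.
by apply: le_lt_trans xy; rewrite ler_piMl.
Qed.

Lemma derive_along_line (R : realType) (V : normedModType R) (f : V -> R) x v :
  'D_v f x = 'D_1 (fun s : R => f (s *: v + x)) 0.
Proof.
rewrite /derive; apply: congr1; apply: (congr1 (fun g : R -> R => g @ 0^')).
apply/funext => h /=.
by rewrite addr0 scale0r add0r [_%:A]mulr1.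
Qed.

Lemma mulmx_quad_formE (R : comNzRingType) d (v : 'rV[R]_d) (H : 'M[R]_d) :
  (v *m H *m v^T) ord0 ord0 = \sum_i \sum_k v ord0 i * v ord0 k * H i k.
Proof.
rewrite mxE; under eq_bigr => k _ do rewrite !mxE mulr_suml.
rewrite exchange_big /=; apply: eq_bigr => i _; apply: eq_bigr => k _ /=; ring.
Qed.

Section line_derivatives.
Variables (R : realType) (d : nat) (v c : 'rV[R]_d).

Lemma is_derive_dot_line u (x : R) :
  is_derive x 1 (fun s : R => dot (s *: v + c) u) (dot v u).
Proof. by apply: is_derive_eq (is_derive_affine _ _ x) => // s; rewrite dotDl dotZl. Qed.

Lemma is_derive_sqnorm_line (x : R) :
  is_derive x 1 (fun s : R => sqnorm (s *: v + c)) (2 * dot (x *: v + c) v).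
Proof.
have coord i : is_derive x 1 (fun s => (s *: v + c) ord0 i) (v ord0 i).
  by apply: is_derive_eq (is_derive_affine _ _ x) => // s; rewrite !mxE mulrC.
apply: is_derive_eq (is_derive_sumf (fun i => is_deriveX 2 (coord i))) => //.
by rewrite /dot mulr_sumr; apply: eq_bigr => i _; rewrite expr1 /GRing.scale /= mulrA.
Qed.

End line_derivatives.

Section irls.
Variables (R : realType) (d n : nat) (a : 'I_n -> 'rV[R]_d) (w : 'I_n -> R) (eps p : R).
Hypotheses (eps_gt0 : 0 < eps) (p_gt0 : 0 < p).
Local Notation e := (@basis_vec R d).
Local Notation Phi := (Phi a w eps p).
Local Notation mu := (mu a w eps p).

Definition sqdist_eps (x : 'rV[R]_d) j : R := sqnorm (x - a j) + eps.

Lemma sqdist_eps_gt0 x j : 0 < sqdist_eps x j.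
Proof. by rewrite ltr_wpDl ?sqnorm_ge0. Qed.

(* The gradient and the Hessian of [Phi] are [p] times these. *)
Definition mu_grad (x : 'rV[R]_d) := \sum_j mu x j *: (x - a j).

Definition hess_form (x v u : 'rV[R]_d) := \sum_j (mu x j * dot v u
  + (p - 2) * (w j * sqdist_eps x j `^ (p / 2 - 2)) * (dot (x - a j) v * dot (x - a j) u)).

Lemma mu_grad_dot x u : dot (mu_grad x) u = \sum_j mu x j * dot (x - a j) u.
Proof. by rewrite dot_suml; apply: eq_bigr => j _; rewrite dotZl. Qed.

Lemma is_derive_sqdist_eps_line y v j (s0 : R) :
  is_derive s0 1 (fun s => sqdist_eps (s *: v + y) j) (2 * dot (s0 *: v + y - a j) v).
Proof.
by apply: is_derive_eq (is_derive_addr eps (is_derive_sqnorm_line v (y - a j) s0)) => [s|];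
  rewrite /sqdist_eps addrA.
Qed.

Lemma is_derive_Phi_line y v (s0 : R) :
  is_derive s0 1 (fun s => Phi (s *: v + y)) (p * dot (mu_grad (s0 *: v + y)) v).
Proof.
have H j := is_derive_mull (w j)
  (is_derive_powR_comp (p / 2) (is_derive_sqdist_eps_line y v j s0) (sqdist_eps_gt0 _ j)).
apply: is_derive_eq (is_derive_sumf H) => //.
by rewrite mu_grad_dot mulr_sumr; apply: eq_bigr => j _; rewrite /mu /sqdist_eps; field.
Qed.

Lemma is_derive_mu_grad_line y v u (s0 : R) :
  is_derive s0 1 (fun s => dot (mu_grad (s *: v + y)) u) (hess_form (s0 *: v + y) v u).
Proof.
have H j := is_derive_mul
  (is_derive_mull (w j) (is_derive_powR_comp (p / 2 - 1)
     (is_derive_sqdist_eps_line y v j s0) (sqdist_eps_gt0 _ j)))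
  (is_derive_dot_line v (y - a j) u s0).
apply: is_derive_eq (is_derive_sumf H).
  by move=> s; rewrite mu_grad_dot; apply: eq_bigr => j _; rewrite /mu addrA.
apply: eq_bigr => j _; rewrite (_ : p / 2 - 1 - 1 = p / 2 - 2); last by ring.
by rewrite /mu /sqdist_eps addrA; field.
Qed.

Lemma derive_Phi_basis_vec k : 'D_(e k) Phi = fun y => p * dot (mu_grad y) (e k).
Proof.
apply/funext => y; rewrite derive_along_line.
by have [_ ->] := is_derive_Phi_line y (e k) 0; rewrite scale0r add0r.
Qed.

Lemma hessian_PhiE x i k : hessian Phi x i k = p * hess_form x (e i) (e k).
Proof.
rewrite mxE derive_Phi_basis_vec derive_along_line.
have [_ ->] := is_derive_mull p (is_derive_mu_grad_line x (e i) (e k) 0).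
by rewrite scale0r add0r.
Qed.

Lemma hess_form_expand x v u :
  hess_form x v u = \sum_i \sum_k v ord0 i * u ord0 k * hess_form x (e i) (e k).
Proof.
under [RHS]eq_bigr => i _ do under eq_bigr => k _ do rewrite mulr_sumr.
under [RHS]eq_bigr => i _ do rewrite exchange_big.
rewrite [RHS]exchange_big; apply: eq_bigr => j _ /=.
rewrite dot_expand dot_mul_expand !mulr_sumr -big_split; apply: eq_bigr => i _ /=.
rewrite !mulr_sumr -big_split; apply: eq_bigr => k _ /=; ring.
Qed.

Lemma continuous_hess_form (T : topologicalType) (f g h : T -> 'rV[R]_d) z :
  {for z, continuous f} -> {for z, continuous g} -> {for z, continuous h} ->
  {for z, continuous (fun x => hess_form (f x) (g x) (h x))}.
Proof.
move=> cf cg ch; apply: continuous_sumf => j.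
have cfa : {for z, continuous (fun x => f x - a j)} by exact: (cvgB cf (cvg_cst (a j))).
have cS : {for z, continuous (fun x => sqdist_eps (f x) j)}.
  have -> : (fun x => sqdist_eps (f x) j) = fun x => dot (f x - a j) (f x - a j) + eps.
    by apply/funext => x; rewrite /sqdist_eps sqnormE.
  by apply: continuous_addf; [exact: continuous_dotf|exact: cst_continuous].
have cpow r : {for z, continuous (fun x => w j * sqdist_eps (f x) j `^ r)}.
  apply: continuous_mulf; first exact: cst_continuous.
  by apply: continuous_powRf => //; exact: sqdist_eps_gt0.
apply: continuous_addf; apply: continuous_mulf.
- exact: cpow.
- exact: continuous_dotf.
- by apply: continuous_mulf; [exact: cst_continuous|exact: cpow].
- by apply: continuous_mulf; exact: continuous_dotf.
Qed.

Lemma hess_form_scale x k v : hess_form x (k *: v) (k *: v) = k ^+ 2 * hess_form x v v.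
Proof. by rewrite mulr_sumr; apply: eq_bigr => j _; rewrite dotZl !dotZr; ring. Qed.

Lemma hess_form_gt0 xs : posdef (hessian Phi xs) -> forall v, v != 0 -> 0 < hess_form xs v v.
Proof.
move=> pd v v0; rewrite -(pmulr_rgt0 _ p_gt0); have := pd v v0.
rewrite mulmx_quad_formE hess_form_expand mulr_sumr; congr (0 < _).
apply: eq_bigr => i _; rewrite mulr_sumr; apply: eq_bigr => k _.
by rewrite hessian_PhiE; ring.
Qed.

Lemma hess_form_sphere_min xs : (0 < d)%N -> (forall v, v != 0 -> 0 < hess_form xs v v) ->
  exists2 q, 0 < q & forall v, sqnorm v = 1 -> q <= hess_form xs v v.
Proof.
move=> d_gt0 Hpos; pose S := (@sqnorm R d) @^-1` [set 1].
have S0 : S !=set0 by exists (e (Ordinal d_gt0)); rewrite /S /= sqnorm_basis_vec.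
have csq : continuous (@sqnorm R d).
  have -> : @sqnorm R d = fun v => dot v v by apply/funext => v; rewrite sqnormE.
  by move=> x; apply: continuous_dotf.
have cube : compact [set v : 'rV[R]_d | forall i, `[(-1 : R), 1]%classic (v ord0 i)].
  by apply: (@rV_compact _ _ (fun=> `[(-1 : R), 1]%classic)) => _; exact: segment_compact.
have cS : compact S.
  apply: (subclosed_compact _ cube).
    by apply: preimage_closed; [move=> x _; exact: csq|exact: closed_eq].
  by move=> v /= v1 i; rewrite in_itv /= -ler_norml norm_coord_le1.
have cont : {within S, continuous (fun v => hess_form xs v v)}.
  apply: continuous_subspaceT => v.
  by apply: continuous_hess_form => //; exact: cst_continuous.
have [c Sc cmin] := compact_EVT_min S0 cS cont.
move: Sc; rewrite inE /S /= => c1; exists (hess_form xs c c).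
  by apply: Hpos; rewrite -sqnorm_eq0 c1 oner_neq0.
by move=> v v1; apply: cmin; rewrite inE.
Qed.

Lemma hess_form_near_sphere xs q : 0 < q -> exists2 r, 0 < r &
  forall z, ball xs r z -> forall v, sqnorm v = 1 -> `|hess_form z v v - hess_form xs v v| < q.
Proof.
move=> q_gt0.
pose D z := \sum_i \sum_k `|hess_form z (e i) (e k) - hess_form xs (e i) (e k)|.
have Dc : {for xs, continuous D}.
  apply: continuous_sumf => i; apply: continuous_sumf => k; apply: continuous_normf.
  by apply: continuous_addf; [apply: continuous_hess_form => //|]; exact: cst_continuous.
have D0 : D xs = 0 by rewrite /D big1 // => i _; rewrite big1 // => k _; rewrite subrr normr0.
have /nbhs_ballP[r r0 Hr] : \forall z \near xs, D z < q by have := cvgr_lt _ Dc; rewrite D0; exact.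
exists r => // z /Hr Dz v v1; apply: le_lt_trans Dz.
rewrite [hess_form z _ _]hess_form_expand [hess_form xs _ _]hess_form_expand -sumrB.
apply: (le_trans (ler_norm_sum _ _ _)); apply: ler_sum => i _; rewrite -sumrB.
apply: (le_trans (ler_norm_sum _ _ _)); apply: ler_sum => k _.
rewrite -mulrBr normrM ler_piMl // normrM.
by rewrite -[1]mulr1 ler_pM // norm_coord_le1.
Qed.

Lemma hess_form_ge_near xs : (0 < d)%N -> posdef (hessian Phi xs) ->
  exists2 lam, 0 < lam & exists2 r, 0 < r &
    forall z, ball xs r z -> forall u, lam * sqnorm u <= hess_form z u u.
Proof.
move=> d_gt0 pd.
have [q q_gt0 Hq] := hess_form_sphere_min d_gt0 (hess_form_gt0 pd).
have [r r_gt0 Hr] := hess_form_near_sphere xs (divr_gt0 q_gt0 (ltr0n _ 2)).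
exists (q / 2); first by rewrite divr_gt0.
exists r => // z zr; apply: sphere_lower_bound (hess_form_scale z) _ => v v1.
by have := Hq v v1; have := Hr z zr v v1; rewrite ltr_norml => /andP[+ _]; lra.
Qed.

Lemma mu_grad_eq0_at_local_min xs : local_minimizer Phi xs -> mu_grad xs = 0.
Proof.
move=> xs_min; apply/rowP => k; rewrite mxE.
pose f s := Phi (s *: e k + xs).
have /nbhs_ballP[r r_gt0 Hr] : \forall s \near (0 : R), f 0 <= f s.
  have line0 : (fun s : R => s *: e k + xs) @ 0 --> xs.
    rewrite -[X in _ --> X]add0r -(scale0r (e k)).
    by apply: cvgD; [exact: scalel_continuous|exact: cvg_cst].
  by rewrite /f scale0r add0r; exact: line0 _ xs_min.
have f'0 : is_derive (0 : R) 1 f 0.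
  apply: (@derive1_at_min _ f (- r) r); rewrite ?ge0_cp ?ltW //.
  - by move=> s _; case: (is_derive_Phi_line xs (e k) s).
  - by rewrite in_itv /= oppr_lt0 r_gt0.
  move=> s; rewrite in_itv /= => /andP[s1 s2]; apply: Hr.
  by rewrite -ball_normE /ball_ /= sub0r normrN ltr_norml s1 s2.
have [_ Df] := is_derive_Phi_line xs (e k) 0; have [_] := f'0.
rewrite {}Df scale0r add0r dot_basis_vec => /eqP.
by rewrite mulf_eq0 gt_eqF //= => /eqP.
Qed.

Lemma Phi_gap_le_sqnorm_grad xs r lam x : 0 < lam -> mu_grad xs = 0 ->
  (forall z, ball xs r z -> forall u, lam * sqnorm u <= hess_form z u u) ->
  ball xs r x -> lam * (Phi x - Phi xs) <= p * sqnorm (mu_grad x).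
Proof.
move=> lam_gt0 grad0 Hlam xr; set u := x - xs.
pose phi (s : R) := dot (mu_grad (s *: u + xs)) u.
have dphi (s : R) : is_derive s 1 phi (hess_form (s *: u + xs) u u) := is_derive_mu_grad_line xs u u s.
have dPhi (s : R) : is_derive s 1 (fun s => Phi (s *: u + xs)) (p * phi s) := is_derive_Phi_line xs u s.
have hess_lb (s : R) : 0 <= s <= 1 -> lam * sqnorm u <= hess_form (s *: u + xs) u u.
  by move=> s01; apply: Hlam; exact: ball_segment.
have phi0 : phi 0 = 0 by rewrite /phi scale0r add0r grad0 dot0l.
have phi1 : phi 1 = dot (mu_grad x) u by rewrite /phi scale1r subrK.
have grad_ge : lam * sqnorm u <= dot (mu_grad x) u.
  by have := MVT_lower_bound ler01 dphi hess_lb; rewrite subr0 mulr1 phi0 subr0 phi1.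
have phi_le1 (s : R) : 0 <= s <= 1 -> phi s <= phi 1.
  move=> /andP[s0 s1]; rewrite -subr_ge0 -(mul0r (1 - s)).
  apply: (MVT_lower_bound s1 dphi) => c /andP[sc c1].
  apply: le_trans (hess_lb c _); first by apply: mulr_ge0; [exact: ltW|exact: sqnorm_ge0].
  by rewrite c1 (le_trans s0 sc).
have gap_le : Phi x - Phi xs <= p * dot (mu_grad x) u.
  have := MVT_upper_bound ler01 dPhi (fun s s01 => ler_wpM2l (ltW p_gt0) (phi_le1 s s01)).
  by rewrite /= scale1r scale0r add0r subrK subr0 mulr1 phi1.
apply: le_trans (ler_wpM2l (ltW lam_gt0) gap_le) _; rewrite mulrCA.
by rewrite ler_pM2l //; exact: dot_le_sqnorm (ltW lam_gt0) grad_ge.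
Qed.

Section descent.
Hypotheses (w_gt0 : forall j, 0 < w j) (p_lt1 : p < 1) (n_gt0 : (0 < n)%N).

Let half_p_lt1 : p / 2 < 1.
Proof. by rewrite ltr_pdivrMr // mul1r (lt_trans p_lt1) // ltr1n. Qed.

Definition mu_sum x := \sum_j mu x j.

Definition mu_sum_max := \sum_j w j * eps `^ (p / 2 - 1).

Lemma mu_gt0 x j : 0 < mu x j.
Proof. exact: mulr_gt0 (w_gt0 j) (powR_gt0 _ (sqdist_eps_gt0 x j)). Qed.

Lemma mu_sum_gt0 x : 0 < mu_sum x.
Proof.
rewrite /mu_sum (bigD1 (Ordinal n_gt0)) //= ltr_pwDl ?mu_gt0 //.
by rewrite sumr_ge0 // => j _; exact: ltW (mu_gt0 x j).
Qed.

Lemma mu_sum_le x : mu_sum x <= mu_sum_max.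
Proof.
apply: ler_sum => j _; apply: ler_wpM2l; first exact: ltW.
apply: (@le0_ger_powR _ (p / 2 - 1) eps); last by rewrite lerDr sqnorm_ge0.
  by rewrite subr_le0 ltW.
exact: eps_gt0.
Qed.

Lemma mu_sum_max_gt0 : 0 < mu_sum_max.
Proof.
rewrite /mu_sum_max (bigD1 (Ordinal n_gt0)) //= ltr_pwDl ?mulr_gt0 ?powR_gt0 //.
by rewrite sumr_ge0 // => j _; rewrite mulr_ge0 ?powR_ge0 ?ltW.
Qed.

Lemma irls_stepE x : irls_step a w eps p x = x - (mu_sum x)^-1 *: mu_grad x.
Proof.
have -> : mu_grad x = mu_sum x *: x - \sum_j mu x j *: a j.
  by rewrite /mu_grad /mu_sum scaler_suml -sumrB; apply: eq_bigr => j _; exact: scalerBr.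
by rewrite scalerBr scalerA mulVf ?gt_eqF ?mu_sum_gt0 // scale1r opprB addrC subrK.
Qed.

Lemma Phi_irls_step_le x :
  Phi (irls_step a w eps p x) <= Phi x - p / 2 * (sqnorm (mu_grad x) / mu_sum x).
Proof.
set y := irls_step a w eps p x; set g := mu_grad x; set M := mu_sum x.
set del := - (M^-1 *: g).
have M_gt0 : 0 < M := mu_sum_gt0 x.
have Sdiff j : sqdist_eps y j - sqdist_eps x j = 2 * dot (x - a j) del + sqnorm del.
  rewrite /sqdist_eps /y irls_stepE -/M -/g.
  by rewrite (_ : x - M^-1 *: g - a j = (x - a j) + del) ?sqnormD; [ring|rewrite addrAC].
(* The tangent majorant; the IRLS step is its exact minimizer. *)
apply: (@le_trans _ _ (\sum_j w j * (sqdist_eps x j `^ (p / 2)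
    + p / 2 * sqdist_eps x j `^ (p / 2 - 1) * (sqdist_eps y j - sqdist_eps x j)))).
  apply: ler_sum => j _; apply: ler_wpM2l; first exact: ltW.
  by apply: concave_powR_tangent; rewrite ?sqdist_eps_gt0 ?divr_gt0.
under eq_bigr do rewrite Sdiff.
have -> : \sum_j w j * (sqdist_eps x j `^ (p / 2)
    + p / 2 * sqdist_eps x j `^ (p / 2 - 1) * (2 * dot (x - a j) del + sqnorm del))
    = Phi x + p / 2 * (2 * dot g del + M * sqnorm del).
  rewrite /g mu_grad_dot /M /mu_sum mulr_suml [2 * \sum_j _]mulr_sumr -big_split /=.
  by rewrite mulr_sumr -big_split /=; apply: eq_bigr => j _; rewrite /mu /sqdist_eps; ring.
have -> : dot g del = - M^-1 * sqnorm g by rewrite /del dotNr dotZr sqnormE mulNr.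
have -> : sqnorm del = M^-1 * M^-1 * sqnorm g by rewrite /del -scaleNr sqnormZ sqrrN expr2.
by rewrite le_eqVlt; apply/orP; left; apply/eqP; field; rewrite gt_eqF.
Qed.

Lemma irls_step_gap_le xs r lam x : 0 < lam -> mu_grad xs = 0 ->
  (forall z, ball xs r z -> forall u, lam * sqnorm u <= hess_form z u u) -> ball xs r x ->
  Phi (irls_step a w eps p x) - Phi xs <= (1 - lam / (2 * mu_sum_max)) * (Phi x - Phi xs).
Proof.
move=> lam_gt0 grad0 Hlam xr.
apply: linear_rate (mu_sum_gt0 x) (mu_sum_le x) (sqnorm_ge0 _) lam_gt0 p_gt0 _
  (Phi_gap_le_sqnorm_grad lam_gt0 grad0 Hlam xr).
by have := Phi_irls_step_le x; lra.
Qed.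

End descent.

End irls.

Theorem proposition7 (R : realType) (d n : nat)
  (a : 'I_n -> 'rV[R]_d) (w : 'I_n -> R) (eps p : R) (x0 xs : 'rV[R]_d) :
  (0 < d)%N -> (0 < n)%N ->
  (forall j, 0 < w j) -> 0 < eps -> 0 < p -> p < 1 ->
  irls_iter a w eps p x0 @ \oo --> xs ->
  local_minimizer (Phi a w eps p) xs ->
  posdef (hessian (Phi a w eps p) xs) ->
  exists nu : R, nu < 1 /\ exists T : nat, forall t : nat, (T <= t)%N ->
    Phi a w eps p (irls_iter a w eps p x0 t.+1) - Phi a w eps p xs
    <= nu * (Phi a w eps p (irls_iter a w eps p x0 t) - Phi a w eps p xs).
Proof.
move=> d_gt0 n_gt0 w_gt0 eps_gt0 p_gt0 p_lt1 xt_cvg xs_min xs_posdef.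
have [lam lam_gt0 [r r_gt0 Hlam]] := hess_form_ge_near eps_gt0 p_gt0 d_gt0 xs_posdef.
have grad0 := mu_grad_eq0_at_local_min eps_gt0 p_gt0 xs_min.
have [T _ xt_near] := xt_cvg _ (nbhsx_ballx xs r r_gt0).
exists (1 - lam / (2 * mu_sum_max w eps p)); split.
  by rewrite ltrBlDr ltrDl divr_gt0 // mulr_gt0 // mu_sum_max_gt0.
exists T => t tT.
rewrite [irls_iter _ _ _ _ _ t.+1]/irls_iter iterS -/(irls_iter a w eps p x0 t).
exact: (irls_step_gap_le eps_gt0 p_gt0 w_gt0 p_lt1 n_gt0 lam_gt0 grad0 Hlam (xt_near t tT)).
Qed.
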